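(* Let $n\ge 2$, let $\mathcal{S}\subseteq(\mathbb{C}^d)^{\otimes n}$ be the permutation-symmetric subspace, let $|\psi\rangle\in\mathcal{S}$ and let $X$ be a $d\times d$ complex matrix with $X_{(1)}|\psi\rangle\in\mathcal{S}$. Then $X^p_{(1)}|\psi\rangle\in\mathcal{S}$ for every natural number $p\ge 0$; if moreover $X$ is invertible, this holds for every integer $p$.
   Context: $\mathcal{S}$ is the set of vectors in $(\mathbb{C}^d)^{\otimes n}$ invariant under all permutations of the $n$ tensor factors. For a $d\times d$ matrix $X$, $X^p_{(1)}$ denotes the operator $X^p\otimes\mathbb{I}\otimes\cdots\otimes\mathbb{I}$ on $(\mathbb{C}^d)^{\otimes n}$. *)

From HB Require Import structures.
From mathcomp Require Import all_boot all_order all_algebra all_fingroup.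
From mathcomp Require Import reals.
From mathcomp.real_closed Require Import complex.
Set Implicit Arguments. Unset Strict Implicit. Unset Printing Implicit Defensive.
Import Order.TTheory GRing.Theory Num.Theory.
Local Open Scope ring_scope.

(* Vectors of (K^d)^{\otimes n} in coordinates: a vector is a function from
   multi-indices (i_1,...,i_n), encoded as {ffun 'I_n -> 'I_d}, to K. *)
Definition tensor (K : Type) (n d : nat) := {ffun 'I_n -> 'I_d} -> K.

Definition in_sym (K : Type) (n d : nat) (psi : tensor K n d) : Prop :=
  forall (s : 'S_n) (i : {ffun 'I_n -> 'I_d}), psi [ffun k => i (s k)] = psi i.

(* X acting on the k-th tensor factor: X_(k) = I ⊗ ... ⊗ X ⊗ ... ⊗ I. *)
Definition op_at (K : nzRingType) (n d : nat) (k : 'I_n) (X : 'M[K]_d)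
  (psi : tensor K n d) : tensor K n d :=
  fun i => \sum_(j < d) X (i k) j * psi [ffun l => if l == k then j else i l].

Definition first_factor (n : nat) (hn : (0 < n)%N) : 'I_n := Ordinal hn.

Definition mxpowz (K : comUnitRingType) (d : nat) (X : 'M[K]_d) (p : int) : 'M[K]_d :=
  match p with
  | Posz k => X ^+ k
  | Negz k => (invmx X) ^+ k.+1
  end.

From HB Require Import structures.
From mathcomp Require Import all_boot all_order all_algebra all_fingroup.
From mathcomp Require Import reals.
From mathcomp.real_closed Require Import complex.
From Stdlib Require Import FunctionalExtensionality.
Set Implicit Arguments. Unset Strict Implicit. Unset Printing Implicit Defensive.
Import Order.TTheory GRing.Theory Num.Theory.
Local Open Scope ring_scope.

(* For symmetric psi, symmetry of X_(1) psi is equivalent to X_(k) psi being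
   the same vector for every factor k (conjugate by the transposition (1 k)).
   That property is inherited by X^p, because operators acting on distinct
   factors commute, and by X^-1, since
   X^-1_(k) psi = X^-1_(k) X_(k) X^-1_(l) psi = X^-1_(l) psi. *)

Definition ffun_set (n d : nat) (i : {ffun 'I_n -> 'I_d}) (k : 'I_n) (j : 'I_d) :
  {ffun 'I_n -> 'I_d} := [ffun l => if l == k then j else i l].

Section FfunSet.
Variables (n d : nat).
Implicit Types (i : {ffun 'I_n -> 'I_d}) (k l : 'I_n) (j m : 'I_d).

Lemma ffun_set_set i k j m : ffun_set (ffun_set i k j) k m = ffun_set i k m.
Proof. by apply/ffunP => x; rewrite !ffunE; case: (x == k). Qed.

Lemma ffun_set_at i k j : ffun_set i k j k = j.
Proof. by rewrite ffunE eqxx. Qed.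

Lemma ffun_set_other i k l j : l != k -> ffun_set i k j l = i l.
Proof. by move=> lk; rewrite ffunE (negbTE lk). Qed.

Lemma ffun_set_id i k : ffun_set i k (i k) = i.
Proof. by apply/ffunP => x; rewrite !ffunE; case: eqP => // ->. Qed.

Lemma ffun_setC i k l j m : k != l ->
  ffun_set (ffun_set i k j) l m = ffun_set (ffun_set i l m) k j.
Proof.
move=> kl; apply/ffunP => x; rewrite !ffunE.
case: (eqVneq x l) => [-> | _] //; case: (eqVneq l k) => // lk.
by rewrite lk eqxx in kl.
Qed.

End FfunSet.

Section OpAtRing.
Variables (K : nzRingType) (n d : nat).
Implicit Types (psi : tensor K n d) (A B : 'M[K]_d).

Lemma op_atE k A psi i :
  op_at k A psi i = \sum_(j < d) A (i k) j * psi (ffun_set i k j).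
Proof. by []. Qed.

Lemma op_atM k A B psi : op_at k (A * B) psi = op_at k A (op_at k B psi).
Proof.
apply: functional_extensionality => i; rewrite !op_atE.
under [RHS]eq_bigr => j _ do rewrite op_atE ffun_set_at mulr_sumr.
rewrite [RHS]exchange_big /=; apply: eq_bigr => l _.
rewrite -mulmxE mxE mulr_suml; apply: eq_bigr => j _.
by rewrite ffun_set_set mulrA.
Qed.

Lemma op_at1 k psi : op_at k 1 psi = psi.
Proof.
apply: functional_extensionality => i; rewrite op_atE (bigD1 (i k)) //=.
rewrite big1 ?addr0; first by rewrite mxE eqxx mul1r ffun_set_id.
by move=> j ji; rewrite mxE eq_sym (negbTE ji) mul0r.
Qed.

Definition permute_factors (s : 'S_n) psi : tensor K n d :=
  fun i => psi [ffun k => i (s k)].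

Lemma permute_factors_op_at s k A psi :
  permute_factors s (op_at k A psi) = op_at (s k) A (permute_factors s psi).
Proof.
apply: functional_extensionality => i; rewrite /permute_factors !op_atE ffunE.
apply: eq_bigr => j _; congr (_ * psi _).
by apply/ffunP => x; rewrite !ffunE (inj_eq perm_inj); case: (x == k).
Qed.

Lemma in_symP psi : in_sym psi <-> forall s, permute_factors s psi = psi.
Proof.
split=> [sym_psi s | fix_psi s i]; first exact: functional_extensionality (sym_psi s).
exact: (congr1 (fun f => f i) (fix_psi s)).
Qed.

Definition same_on_factors A psi := forall k l, op_at k A psi = op_at l A psi.

Lemma same_on_factors_sym k A psi :
  in_sym psi -> in_sym (op_at k A psi) -> same_on_factors A psi.
Proof.
move=> /in_symP sym_psi /in_symP sym_Apsi.
suff op_at_k l : op_at l A psi = op_at k A psi by move=> l m; rewrite !op_at_k.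
by rewrite -[RHS](sym_Apsi (tperm k l)) permute_factors_op_at sym_psi tpermL.
Qed.

Lemma sym_op_at k A psi :
  in_sym psi -> same_on_factors A psi -> in_sym (op_at k A psi).
Proof.
move=> /in_symP sym_psi same_A; apply/in_symP => s.
by rewrite permute_factors_op_at sym_psi (same_A (s k) k).
Qed.

End OpAtRing.

Section OpAtComRing.
Variables (K : comNzRingType) (n d : nat).
Implicit Types (psi : tensor K n d) (A B : 'M[K]_d).

Lemma op_atC k l A B psi : k != l ->
  op_at k A (op_at l B psi) = op_at l B (op_at k A psi).
Proof.
move=> kl; apply: functional_extensionality => i; rewrite !op_atE.
under eq_bigr => j _ do rewrite op_atE ffun_set_other 1?eq_sym // mulr_sumr.
under [RHS]eq_bigr => j _ do rewrite op_atE ffun_set_other // mulr_sumr.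
rewrite exchange_big /=; apply: eq_bigr => m _; apply: eq_bigr => j _.
by rewrite ffun_setC // !mulrA [A _ _ * _]mulrC.
Qed.

Lemma same_on_factorsX A psi p :
  same_on_factors A psi -> same_on_factors (A ^+ p) psi.
Proof.
move=> same_A; elim: p => [|p IHp] k l; first by rewrite !expr0 !op_at1.
have [-> // | kl] := eqVneq k l.
by rewrite exprS op_atM (IHp k l) op_atC // (same_A k l) -op_atM -exprSr exprS.
Qed.

End OpAtComRing.

Lemma same_on_factorsV (K : comUnitRingType) (n d : nat)
    (A : 'M[K]_d) (psi : tensor K n d) :
  A \in unitmx -> same_on_factors A psi -> same_on_factors (invmx A) psi.
Proof.
move=> unitA same_A k l; have [-> // | kl] := eqVneq k l.
have cancel_A m (phi : tensor K n d) : op_at m (invmx A) (op_at m A phi) = phi.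
  by rewrite -op_atM -mulmxE mulVmx // op_at1.
by rewrite -{1}(cancel_A l psi) (same_A l k) -(op_atC _ (invmx A) _ kl) cancel_A.
Qed.

Theorem lemma4 (R : realType) (n d : nat) (hn : (2 <= n)%N)
  (psi : tensor R[i] n d) (X : 'M[R[i]]_d) :
  in_sym psi ->
  in_sym (op_at (first_factor (ltnW hn)) X psi) ->
  (forall p : nat, in_sym (op_at (first_factor (ltnW hn)) (X ^+ p) psi)) /\
  (X \in unitmx ->
     forall p : int, in_sym (op_at (first_factor (ltnW hn)) (mxpowz X p) psi)).
Proof.
move=> sym_psi sym_Xpsi; have same_X := same_on_factors_sym sym_psi sym_Xpsi.
split=> [p | unitX [p | p]] /=; apply: (sym_op_at _ sym_psi).
- exact: same_on_factorsX.
- exact: same_on_factorsX.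
- exact/same_on_factorsX/(same_on_factorsV unitX).
Qed.
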